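(* Let $\boldsymbol{G}$ be a $k\times n$ binary generator matrix of full rank $k$ of a binary $(n,k)$ linear block code $\mathcal{C}$, and let $\boldsymbol{b}^{(1)},\dots,\boldsymbol{b}^{(2^k)}$ be an enumeration of all of $\{0,1\}^k$, with $\boldsymbol{c}^{(j)}=\boldsymbol{b}^{(j)}\boldsymbol{G}$ (over $\mathrm{GF}(2)$), so $\mathcal{C}=\{\boldsymbol{c}^{(1)},\dots,\boldsymbol{c}^{(2^k)}\}$. Let $\sigma^2>0$ be the channel noise variance. Consider a three-layer neural network (no biases) with $n$ input neurons, $2^k$ hidden neurons and $k$ output neurons, where: (i) the $n\times 2^k$ binary weight matrix $\boldsymbol{W}^{(1)}$ from input to hidden layer has $j$-th column $\boldsymbol{c}^{(j)}$; (ii) the hidden layer applies the scaled softmax activation with scaling factor $\alpha=2/\sigma^2$, i.e. given pre-activations $x_1,\dots,x_{2^k}$ it outputs $h_j=\exp(\alpha x_j)/\sum_{l=1}^{2^k}\exp(\alpha x_l)$; (iii) the $2^k\times k$ binary weight matrix $\boldsymbol{W}^{(2)}$ from hidden to output layer has $j$-th row $\boldsymbol{b}^{(j)}$, and the output neurons compute $\boldsymbol{h}\boldsymbol{W}^{(2)}$; (iv) the decision on the $i$-th information bit is obtained by thresholding the $i$-th output at $1/2$: $\hat b_i=1$ if the output exceeds $1/2$ and $\hat b_i=0$ if it is below $1/2$. Then, for a received vector $\boldsymbol{r}\in\mathbb{R}^n$ (row vector, input as $\boldsymbol{r}\boldsymbol{W}^{(1)}$ to the hidden layer), this network realizes bit-wise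 maximum likelihood (equivalently, under the uniform prior, bit-wise maximum a posteriori) decoding of the information bits, i.e. $\hat b_i\in\mathop{\mathrm{argmax}}_{b\in\{0,1\}} P(b_i=b\mid\boldsymbol{r})$ for each $i=1,\dots,k$. No training is required.
   Context: Transmission model: the information vector $\boldsymbol{b}=(b_1,\dots,b_k)$ has i.i.d. uniform bits and is encoded to $\boldsymbol{c}=\boldsymbol{b}\boldsymbol{G}$; the code bits are mapped to BPSK symbols $s_i=2c_i-1\in\{-1,1\}$ and sent over a binary-input additive white Gaussian noise channel: the receiver observes $\boldsymbol{r}=\boldsymbol{s}+\boldsymbol{w}$ with $w_1,\dots,w_n$ i.i.d. zero-mean Gaussian of variance $\sigma^2$, so $p(\boldsymbol{r}\mid\boldsymbol{c})=\prod_{i=1}^n \frac{1}{\sqrt{2\pi\sigma^2}}\exp\!\big(-\frac{(r_i-(2c_i-1))^2}{2\sigma^2}\big)$. Bit-wise MAP/ML decoding chooses, for each bit position $i$, the value $b\in\{0,1\}$ maximizing the posterior probability $P(b_i=b\mid\boldsymbol{r})$ (equivalently the likelihood $p(\boldsymbol{r}\mid b_i=b)$, since bits are uniform); ties may be broken arbitrarily. *)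

From HB Require Import structures.
From mathcomp Require Import all_boot all_order all_algebra.
From mathcomp Require Import all_classical all_reals all_analysis.
Set Implicit Arguments. Unset Strict Implicit. Unset Printing Implicit Defensive.
Import Order.TTheory GRing.Theory Num.Theory.
Local Open Scope ring_scope.

Section Defs.
Variable R : realType.

Definition bitR (x : 'F_2) : R := if x == 0 then 0 else 1.

Definition bpsk (x : 'F_2) : R := 2 * bitR x - 1.

Definition awgn_lik n (s2 : R) (r : 'rV[R]_n) (c : 'rV['F_2]_n) : R :=
  \prod_(l < n) ((Num.sqrt (2 * pi * s2))^-1 *
                 expR (- (r 0 l - bpsk (c 0 l)) ^+ 2 / (2 * s2))).

(* posterior P(b_i = b | r) under uniform prior 2^-k on information words,
   codeword c = b G, by Bayes' rule *)
Definition posterior_bit n k (s2 : R) (G : 'M['F_2]_(k, n)) (r : 'rV[R]_n)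
  (i : 'I_k) (b : 'F_2) : R :=
  (\sum_(u : 'rV['F_2]_k | u 0 i == b) ((2 ^ k)%:R^-1 * awgn_lik s2 r (u *m G)))
  / (\sum_(u : 'rV['F_2]_k) ((2 ^ k)%:R^-1 * awgn_lik s2 r (u *m G))).

(* the network: e enumerates {0,1}^k as b^(1), ..., b^(2^k) *)
Definition W1 n k (e : 'I_(2 ^ k) -> 'rV['F_2]_k) (G : 'M['F_2]_(k, n))
  : 'M[R]_(n, 2 ^ k) := \matrix_(l, j) bitR ((e j *m G) 0 l).

Definition W2 k (e : 'I_(2 ^ k) -> 'rV['F_2]_k) : 'M[R]_(2 ^ k, k) :=
  \matrix_(j, i) bitR (e j 0 i).

Definition scaled_softmax m (alpha : R) (x : 'rV[R]_m) : 'rV[R]_m :=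
  \row_j (expR (alpha * x 0 j) / \sum_(l < m) expR (alpha * x 0 l)).

Definition nn_output n k (s2 : R) (e : 'I_(2 ^ k) -> 'rV['F_2]_k)
  (G : 'M['F_2]_(k, n)) (r : 'rV[R]_n) : 'rV[R]_k :=
  scaled_softmax (2 / s2) (r *m W1 e G) *m W2 e.

End Defs.

From HB Require Import structures.
From mathcomp Require Import all_boot all_order all_algebra.
From mathcomp Require Import all_classical all_reals all_analysis.
From mathcomp Require Import ring lra.
Set Implicit Arguments. Unset Strict Implicit. Unset Printing Implicit Defensive.
Import Order.TTheory GRing.Theory Num.Theory.
Local Open Scope ring_scope.

(* Since BPSK symbols have square 1, the AWGN likelihood of a codeword c is
   a c-independent factor times exp((2/sigma^2) <r, c>).  Hence the posterior
   P(b_i = b | r) is proportional to the mass M_b of these exponentials over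
   the information words with i-th bit b, while the softmax layer followed by
   W2 outputs exactly M_1 / (M_0 + M_1).  Thresholding this ratio at 1/2 is
   comparing M_1 with M_0, i.e. choosing the larger posterior. *)

Lemma F2_cases (x : 'F_2) : x = 0 \/ x = 1.
Proof. by case: x => [[|[|m]] Hm]; [left|right|] => //; exact/val_inj. Qed.

Lemma bigF2_split (V : nmodType) (I : finType) (f : I -> 'F_2) (F : I -> V) :
  \sum_x F x = \sum_(x | f x == 0) F x + \sum_(x | f x == 1) F x.
Proof.
rewrite (bigID (fun x => f x == 0)) /=; congr (_ + _).
by apply: eq_bigl => x; case: (F2_cases (f x)) => ->.
Qed.

Lemma threshold_half_argmax (R : realFieldType) (a : 'F_2 -> R) (bhat : 'F_2) :
  0 < a 0 + a 1 ->
  (1 / 2 < a 1 / (a 0 + a 1) -> bhat = 1) ->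
  (a 1 / (a 0 + a 1) < 1 / 2 -> bhat = 0) ->
  forall b, a b <= a bhat.
Proof.
move=> a_gt0 above below b.
case: (ltgtP (a 0) (a 1)) => [lt01|lt10|eq01].
- rewrite above; last by rewrite ltr_pdivlMr //; lra.
  by case: (F2_cases b) => ->; rewrite ?lexx ?ltW.
- rewrite below; last by rewrite ltr_pdivrMr //; lra.
  by case: (F2_cases b) => ->; rewrite ?lexx ?ltW.
- by case: (F2_cases b) => ->; case: (F2_cases bhat) => ->; rewrite ?eq01.
Qed.

Lemma scaled_softmax_mulmx (R : realType) m p (alpha : R) (x : 'rV[R]_m)
    (M : 'M[R]_(m, p)) i :
  (scaled_softmax alpha x *m M) 0 i =
  (\sum_j expR (alpha * x 0 j) * M j i) / \sum_j expR (alpha * x 0 j).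
Proof. by rewrite mxE mulr_suml; apply: eq_bigr => j _; rewrite mxE mulrAC. Qed.

Section AWGN.
Variables (R : realType) (n : nat) (s2 : R).
Hypothesis s2_gt0 : 0 < s2.

Definition corr (r : 'rV[R]_n) (c : 'rV['F_2]_n) : R :=
  \sum_l r 0 l * bitR R (c 0 l).

Lemma awgn_likE (r : 'rV[R]_n) (c : 'rV['F_2]_n) :
  awgn_lik s2 r c = awgn_lik s2 r 0 * expR (2 / s2 * corr r c).
Proof.
rewrite /awgn_lik /corr mulr_sumr expR_sum -big_split /=.
apply: eq_bigr => l _; rewrite mxE -[_ * expR _ * expR _]mulrA -expRD.
congr (_ * expR _).
have s2_neq0 : s2 != 0 by rewrite gt_eqF.
by rewrite /bpsk /bitR eqxx; case: (F2_cases (c 0 l)) => -> /=; field.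
Qed.

Lemma awgn_lik_gt0 (r : 'rV[R]_n) (c : 'rV['F_2]_n) : 0 < awgn_lik s2 r c.
Proof.
apply: prodr_gt0 => l _; rewrite mulr_gt0 ?expR_gt0 // invr_gt0 sqrtr_gt0.
by rewrite !mulr_gt0 ?pi_gt0.
Qed.

End AWGN.

Section BitwiseDecoder.
Variables (R : realType) (n k : nat) (s2 : R) (G : 'M['F_2]_(k, n)).
Variables (r : 'rV[R]_n) (i : 'I_k).
Hypothesis s2_gt0 : 0 < s2.

Definition corr_weight (u : 'rV['F_2]_k) : R := expR (2 / s2 * corr r (u *m G)).

Definition bit_mass (b : 'F_2) : R := \sum_(u : 'rV_k | u 0 i == b) corr_weight u.

Lemma bit_mass_total : bit_mass 0 + bit_mass 1 = \sum_u corr_weight u.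
Proof. by rewrite (bigF2_split (fun u : 'rV_k => u 0 i)). Qed.

Lemma bit_mass_total_gt0 : 0 < bit_mass 0 + bit_mass 1.
Proof.
rewrite bit_mass_total (bigD1 0) //= ltr_pwDl ?expR_gt0 //.
by rewrite sumr_ge0 // => u _; rewrite ltW ?expR_gt0.
Qed.

Lemma posterior_bitE b :
  posterior_bit s2 G r i b = bit_mass b / (bit_mass 0 + bit_mass 1).
Proof.
have lik_sum (P : pred 'rV_k) :
    \sum_(u | P u) (2 ^ k)%:R^-1 * awgn_lik s2 r (u *m G) =
    (2 ^ k)%:R^-1 * awgn_lik s2 r 0 * \sum_(u | P u) corr_weight u.
  by rewrite mulr_sumr; apply: eq_bigr => u _; rewrite (awgn_likE s2_gt0) mulrA.
rewrite /posterior_bit !lik_sum bit_mass_total invfM mulrACA mulfV ?mul1r //.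
by rewrite mulf_neq0 ?gt_eqF ?awgn_lik_gt0 // invr_gt0 ltr0n expn_gt0.
Qed.

Lemma softmax_input_W1 (e : 'I_(2 ^ k) -> 'rV['F_2]_k) j :
  expR (2 / s2 * (r *m W1 R e G) 0 j) = corr_weight (e j).
Proof. by rewrite mxE; congr (expR (_ * _)); apply: eq_bigr => l _; rewrite mxE. Qed.

Lemma nn_outputE (e : 'I_(2 ^ k) -> 'rV['F_2]_k) : bijective e ->
  nn_output s2 e G r 0 i = bit_mass 1 / (bit_mass 0 + bit_mass 1).
Proof.
move=> /onW_bij e_bij; rewrite /nn_output scaled_softmax_mulmx bit_mass_total.
under eq_bigr => j _ do rewrite softmax_input_W1 mxE.
under [X in _ / X = _]eq_bigr => j _ do rewrite softmax_input_W1.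
rewrite -(reindex e (P := xpredT) (F := corr_weight) (e_bij _)).
rewrite -(reindex e (P := xpredT)
  (F := fun u => corr_weight u * bitR R (u 0 i)) (e_bij _)).
rewrite (bigF2_split (fun u : 'rV_k => u 0 i)) big1 ?add0r => [|u /eqP->].
  by congr (_ / _); apply: eq_bigr => u /eqP->; rewrite mulr1.
by rewrite /bitR eqxx mulr0.
Qed.

End BitwiseDecoder.

Theorem theorem2 (R : realType) (n k : nat) (G : 'M['F_2]_(k, n))
  (hrank : \rank G = k)
  (e : 'I_(2 ^ k) -> 'rV['F_2]_k) (he : bijective e)
  (s2 : R) (hs2 : 0 < s2) (r : 'rV[R]_n) (i : 'I_k) (bhat : 'F_2) :
  (1 / 2 < nn_output s2 e G r 0 i -> bhat = 1) ->
  (nn_output s2 e G r 0 i < 1 / 2 -> bhat = 0) ->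
  forall b : 'F_2, posterior_bit s2 G r i b <= posterior_bit s2 G r i bhat.
Proof.
rewrite (nn_outputE s2 G r i he) => above below b.
rewrite !posterior_bitE // ler_pM2r ?invr_gt0 ?bit_mass_total_gt0 //.
exact: (threshold_half_argmax (a := bit_mass s2 G r i))
  (bit_mass_total_gt0 s2 G r i) above below b.
Qed.
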